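(* Let $A\subset\mathbb{N}\setminus\{1\}$. If $L(A)$ is densely lineable in $\ell^\infty$, then $A\cap(A-1)$ is infinite, where $A-1=\{a-1:a\in A\}$. In particular, $L(2\mathbb{N}+1)$ and $L(2\mathbb{N})$ are not densely lineable.
   Context: $\ell^\infty$ is the Banach space of bounded real sequences with the sup norm. For $x\in\ell^\infty$, $L_x$ denotes the set of accumulation points (subsequential limits) of $x$. For a set $A$ of cardinalities, $L(A)=\{x\in\ell^\infty: |L_x|\in A\}$. A subset $Y$ of $\ell^\infty$ is densely lineable if $Y\cup\{0\}$ contains an infinite-dimensional linear subspace that is dense in $\ell^\infty$ (norm topology). *)

From Stdlib Require Import Reals List.
Import ListNotations.
Open Scope R_scope.

Definition rseq := nat -> R.

Definition bounded (x : rseq) : Prop :=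
  exists M : R, forall n : nat, Rabs (x n) <= M.

Definition acc_point (x : rseq) (a : R) : Prop :=
  exists phi : nat -> nat,
    (forall n, (phi n < phi (S n))%nat) /\ Un_cv (fun n => x (phi n)) a.

Definition has_card (S : R -> Prop) (k : nat) : Prop :=
  exists l : list R, NoDup l /\ length l = k /\ (forall a, In a l <-> S a).

(* L(A) = { x in ell^infty : |L_x| in A }, for A a set of natural numbers. *)
Definition in_LA (A : nat -> Prop) (x : rseq) : Prop :=
  bounded x /\ exists k : nat, A k /\ has_card (acc_point x) k.

Definition zero_seq : rseq := fun _ => 0.

Definition linear_subspace (V : rseq -> Prop) : Prop :=
  (forall x, V x -> bounded x) /\
  V zero_seq /\
  (forall x y, V x -> V y -> V (fun n => x n + y n)) /\
  (forall (c : R) x, V x -> V (fun n => c * x n)).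

Definition lin_indep (m : nat) (v : nat -> rseq) : Prop :=
  forall c : nat -> R,
    (forall k : nat, fold_right Rplus 0 (map (fun i => c i * v i k) (seq 0 m)) = 0) ->
    forall i, (i < m)%nat -> c i = 0.

Definition infinite_dimensional (V : rseq -> Prop) : Prop :=
  forall m : nat, exists v : nat -> rseq,
    (forall i, (i < m)%nat -> V (v i)) /\ lin_indep m v.

Definition dense_in_linf (V : rseq -> Prop) : Prop :=
  forall x : rseq, bounded x -> forall eps : R, eps > 0 ->
    exists y, V y /\ forall n, Rabs (x n - y n) <= eps.

Definition densely_lineable (Y : rseq -> Prop) : Prop :=
  exists V : rseq -> Prop,
    linear_subspace V /\ infinite_dimensional V /\ dense_in_linf V /\
    (forall x, V x -> Y x \/ x = zero_seq).

Definition infinite_nat (P : nat -> Prop) : Prop :=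
  forall N : nat, exists n, (N <= n)%nat /\ P n.

(* 2N+1 and 2N with N = {1,2,3,...}. *)
Definition odd_set : nat -> Prop := fun k => exists m, (1 <= m)%nat /\ k = (2 * m + 1)%nat.
Definition even_set : nat -> Prop := fun k => exists m, (1 <= m)%nat /\ k = (2 * m)%nat.

(* Let V be a dense linear subspace of l^oo contained in L(A) ∪ {0}.
   1. Density lets V approximate a periodic staircase sequence, so V contains
      an x with arbitrarily many (finitely many) accumulation points.
   2. Let p > q be the two largest accumulation points of x, and approximate
      M·1{x_k near p} by some w ∈ V.  The joint accumulation pairs (a, b) of
      (x, w) form a finite set J, at least as large as L_x; over a = p the
      second coordinate is ≈ M, elsewhere it is ≈ 0.
   3. The accumulation points of αx + βw are exactly the values αa + βb with
      (a, b) ∈ J.  For a steep functional (α = K large, β = 1) this map is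
      injective on J; for α = bmax - bmin, β = q - p (bmax the top pair over p,
      bmin the bottom pair over q) these two pairs are the only collision.
   Hence |J| and |J| - 1 both lie in A. *)

From Pilot Require Import Defs.
From Stdlib Require Import Reals List Lra Lia ClassicalEpsilon.
Open Scope R_scope.

Lemma Rabs_le_bounds (a b : R) : Rabs a <= b -> - b <= a <= b.
Proof. unfold Rabs; destruct Rcase_abs; lra. Qed.

Definition strict_incr (phi : nat -> nat) : Prop := forall n, (phi n < phi (S n))%nat.

Lemma strict_incr_ge (phi : nat -> nat) : strict_incr phi -> forall n, (n <= phi n)%nat.
Proof. intros Hphi n; induction n as [|n IH]; [lia|]; specialize (Hphi n); lia. Qed.

Lemma strict_incr_mono (phi : nat -> nat) :
  strict_incr phi -> forall n m, (n <= m)%nat -> (phi n <= phi m)%nat.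
Proof. intros Hphi n m Hnm; induction Hnm as [|m _ IH]; [lia|]; specialize (Hphi m); lia. Qed.

Lemma strict_incr_comp (phi psi : nat -> nat) :
  strict_incr phi -> strict_incr psi -> strict_incr (fun n => phi (psi n)).
Proof.
  intros Hphi Hpsi n.
  pose proof (strict_incr_mono phi Hphi _ _ (Hpsi n)).
  specialize (Hphi (psi n)); lia.
Qed.

Lemma Un_cv_subseq (u : nat -> R) (l : R) (phi : nat -> nat) :
  strict_incr phi -> Un_cv u l -> Un_cv (fun n => u (phi n)) l.
Proof.
  intros Hphi Hu eps Heps; destruct (Hu eps Heps) as [N HN]; exists N.
  intros n Hn; apply HN; pose proof (strict_incr_ge phi Hphi n); lia.
Qed.

Lemma bounded_subseq (u : rseq) (phi : nat -> nat) : Defs.bounded u -> Defs.bounded (fun n => u (phi n)).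
Proof. intros [M HM]; exists M; intros n; apply HM. Qed.

Lemma Un_cv_bounds (u : nat -> R) (l lo hi : R) (N : nat) :
  Un_cv u l -> (forall n, (N <= n)%nat -> lo <= u n <= hi) -> lo <= l <= hi.
Proof.
  intros Hu Hb; split; apply Rnot_lt_le; intros Hl.
  - destruct (Hu (lo - l)) as [N' HN']; [lra|].
    specialize (HN' (N + N')%nat ltac:(lia)); specialize (Hb (N + N')%nat ltac:(lia)).
    apply Rabs_def2 in HN'; lra.
  - destruct (Hu (l - hi)) as [N' HN']; [lra|].
    specialize (HN' (N + N')%nat ltac:(lia)); specialize (Hb (N + N')%nat ltac:(lia)).
    apply Rabs_def2 in HN'; lra.
Qed.

(* Sequential Bolzano-Weierstrass, obtained from the cluster-point version of
   Rtopology by choosing the n-th index within distance 1/(n+1) of the cluster point. *)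
Lemma bounded_cv_subseq (u : rseq) :
  Defs.bounded u -> exists phi l, strict_incr phi /\ Un_cv (fun n => u (phi n)) l.
Proof.
  intros [M HM].
  destruct (Bolzano_Weierstrass u (fun c => - M <= c <= M) (compact_P3 _ _)) as [l Hl].
  { intros n; apply Rabs_le_bounds, HM. }
  assert (Hclose : forall N k : nat, exists m, (N <= m)%nat /\ Rabs (u m - l) < / INR (S k)).
  { intros N k.
    assert (Hk : 0 < / INR (S k)) by (apply Rinv_0_lt_compat, lt_0_INR; lia).
    destruct (Hl (disc l (mkposreal _ Hk)) N) as [m Hm]; [now exists (mkposreal _ Hk)|].
    exists m; exact Hm. }
  destruct (choice (fun Nk m => (fst Nk <= m)%nat /\ Rabs (u m - l) < / INR (S (snd Nk))))
    as [pick Hpick]; [intros [N k]; apply Hclose|].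
  set (phi := fix phi n := match n with O => pick (O, O) | S n' => pick (S (phi n'), n) end).
  assert (Hphi : forall n, Rabs (u (phi n) - l) < / INR (S n)) by (intros [|n]; apply Hpick).
  exists phi, l; split.
  - intros n; exact (proj1 (Hpick (S (phi n), S n))).
  - intros eps Heps; destruct (archimed_cor1 eps Heps) as [N [HN HN0]]; exists N.
    intros n Hn; apply (Rlt_le_trans _ _ _ (Hphi n)); apply Rlt_le, (Rle_lt_trans _ (/ INR N)); auto.
    apply Rinv_le_contravar; [apply lt_0_INR; lia | apply le_INR; lia].
Qed.

Definition joint_acc (x w : rseq) (a b : R) : Prop :=
  exists phi, strict_incr phi /\
    Un_cv (fun n => x (phi n)) a /\ Un_cv (fun n => w (phi n)) b.

Lemma joint_acc_proj (x w : rseq) (a b : R) :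
  joint_acc x w a b -> acc_point x a /\ acc_point w b.
Proof. intros [phi [Hphi [Ha Hb]]]; split; exists phi; auto. Qed.

Lemma joint_acc_fiber (x w : rseq) (a : R) :
  Defs.bounded w -> acc_point x a -> exists b, joint_acc x w a b.
Proof.
  intros Bw [phi [Hphi Ha]].
  destruct (bounded_cv_subseq _ (bounded_subseq w phi Bw)) as [psi [b [Hpsi Hb]]].
  exists b, (fun n => phi (psi n)); split; [now apply strict_incr_comp|].
  split; [exact (Un_cv_subseq _ _ _ Hpsi Ha) | exact Hb].
Qed.

Lemma Un_cv_scal (u : nat -> R) (l c : R) : Un_cv u l -> Un_cv (fun n => c * u n) (c * l).
Proof.
  intros Hu; apply (CV_mult (fun _ => c) u c l); [|exact Hu].
  intros eps Heps; exists O; intros n _; unfold R_dist; rewrite Rminus_diag, Rabs_R0; lra.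
Qed.

Lemma acc_point_comb (x w : rseq) (al be c : R) :
  Defs.bounded x -> Defs.bounded w ->
  acc_point (fun n => al * x n + be * w n) c <->
  exists a b, joint_acc x w a b /\ c = al * a + be * b.
Proof.
  intros Bx Bw; split.
  - intros [phi [Hphi Hc]].
    destruct (bounded_cv_subseq _ (bounded_subseq x phi Bx)) as [psi [a [Hpsi Ha]]].
    destruct (bounded_cv_subseq _ (bounded_subseq w (fun n => phi (psi n)) Bw))
      as [chi [b [Hchi Hb]]].
    assert (Hth : strict_incr (fun n => phi (psi (chi n))))
      by (apply strict_incr_comp; [|apply strict_incr_comp]; assumption).
    assert (Ha' : Un_cv (fun n => x (phi (psi (chi n)))) a)
      by exact (Un_cv_subseq (fun n => x (phi (psi n))) a chi Hchi Ha).
    exists a, b; split; [exists (fun n => phi (psi (chi n))); auto|].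
    apply (UL_sequence (fun n => al * x (phi (psi (chi n))) + be * w (phi (psi (chi n))))).
    + apply (Un_cv_subseq (fun n => al * x (phi n) + be * w (phi n)) c (fun n => psi (chi n)));
        [apply strict_incr_comp|]; assumption.
    + apply CV_plus; apply Un_cv_scal; assumption.
  - intros [a [b [[phi [Hphi [Ha Hb]]] ->]]].
    exists phi; split; [exact Hphi|]; apply CV_plus; apply Un_cv_scal; assumption.
Qed.

Lemma acc_point_band (y : rseq) (phi : nat -> nat) (lo hi : R) :
  Defs.bounded y -> strict_incr phi -> (forall n, lo <= y (phi n) <= hi) ->
  exists c, acc_point y c /\ lo <= c <= hi.
Proof.
  intros By Hphi Hband.
  destruct (bounded_cv_subseq _ (bounded_subseq y phi By)) as [psi [c [Hpsi Hc]]].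
  exists c; split.
  - exists (fun n => phi (psi n)); split; [apply strict_incr_comp|]; assumption.
  - apply (Un_cv_bounds _ _ _ _ O Hc); intros n _; apply Hband.
Qed.

Lemma joint_acc_snd_bounds (x w : rseq) (a b r lo hi : R) :
  joint_acc x w a b -> 0 < r ->
  (forall k, Rabs (x k - a) < r -> lo <= w k <= hi) -> lo <= b <= hi.
Proof.
  intros [phi [Hphi [Ha Hb]]] Hr Hpin.
  destruct (Ha r Hr) as [N HN].
  apply (Un_cv_bounds _ _ _ _ N Hb); intros n Hn; apply Hpin, HN, Hn.
Qed.

Lemma has_card_unique (S : R -> Prop) (k1 k2 : nat) :
  has_card S k1 -> has_card S k2 -> k1 = k2.
Proof.
  intros [l1 [N1 [L1 I1]]] [l2 [N2 [L2 I2]]]; subst k1 k2.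
  apply Nat.le_antisymm; apply NoDup_incl_length; auto;
    intros a Ha; [apply I2, I1 | apply I1, I2]; exact Ha.
Qed.

Lemma finite_listing {T : Type} (dec : forall u v : T, {u = v} + {u <> v})
    (P : T -> Prop) (l : list T) :
  (forall u, P u -> In u l) -> exists l', NoDup l' /\ forall u, In u l' <-> P u.
Proof.
  intros HPl.
  exists (nodup dec (filter (fun u => if excluded_middle_informative (P u) then true else false) l)).
  split; [apply NoDup_nodup|]; intros u.
  rewrite nodup_In, filter_In.
  destruct (excluded_middle_informative (P u)) as [Hu|Hu]; split.
  - tauto.
  - intros H; split; auto.
  - intros [_ H]; discriminate.
  - tauto.
Qed.

Lemma has_card_image {T : Type} (S : R -> Prop) (F : T -> R) (l : list T) :
  NoDup l -> (forall u v, In u l -> In v l -> F u = F v -> u = v) ->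
  (forall c, S c <-> exists u, In u l /\ c = F u) -> has_card S (length l).
Proof.
  intros Hl Hinj HS; exists (map F l); split; [|split; [apply length_map|]].
  - apply NoDup_map_NoDup_ForallPairs; [|exact Hl].
    intros u v Hu Hv; apply Hinj; assumption.
  - intros c; rewrite HS, in_map_iff; split; intros [u [Hu Hc]]; exists u; auto.
Qed.

(* If the only collision of F on l is F r = F s, the image has one element
   fewer than l: drop s and apply the injective case. *)
Lemma has_card_image_one_collision {T : Type} (S : R -> Prop) (F : T -> R) (l : list T) (r s : T) :
  NoDup l -> In r l -> In s l -> r <> s -> F r = F s ->
  (forall u v, In u l -> In v l -> F u = F v -> u = v \/ (u = r /\ v = s) \/ (u = s /\ v = r)) ->
  (forall c, S c <-> exists u, In u l /\ c = F u) -> has_card S (pred (length l)).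
Proof.
  intros Hl Hr Hs Hrs HFrs Hcoll HS.
  destruct (in_split s l Hs) as [l1 [l2 ->]].
  assert (Hnd : NoDup (l1 ++ l2)) by exact (NoDup_remove_1 _ _ _ Hl).
  assert (Hs' : ~ In s (l1 ++ l2)) by exact (NoDup_remove_2 _ _ _ Hl).
  assert (Hin : forall u, In u (l1 ++ s :: l2) <-> In u (l1 ++ l2) \/ u = s).
  { intros u; rewrite !in_app_iff; simpl; intuition. }
  assert (Hr' : In r (l1 ++ l2)) by (destruct (proj1 (Hin r) Hr); [assumption | contradiction]).
  replace (pred (length (l1 ++ s :: l2))) with (length (l1 ++ l2))
    by (rewrite !length_app; simpl; lia).
  apply (has_card_image S F); [exact Hnd| |].
  - intros u v Hu Hv Huv.
    destruct (Hcoll u v) as [E|[[-> ->]|[-> ->]]]; try apply Hin; auto; contradiction.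
  - intros c; rewrite HS; split; intros [u [Hu ->]].
    + destruct (proj1 (Hin u) Hu) as [Hu'| ->]; [now exists u | now exists r].
    + exists u; split; [apply Hin; auto | reflexivity].
Qed.

Lemma list_argmax (P : R -> Prop) (f : R -> R) (l : list R) :
  (exists a, In a l /\ P a) ->
  exists m, In m l /\ P m /\ forall a, In a l -> P a -> f a <= f m.
Proof.
  induction l as [|c l IH]; intros [a [Ha Pa]]; [destruct Ha|].
  destruct (classic (exists a, In a l /\ P a)) as [Hex|Hnone].
  - destruct (IH Hex) as [m [Hm [Pm Hmax]]].
    destruct (classic (P c /\ f m <= f c)) as [[Pc Hc]|Hc].
    + exists c; split; [now left|split; [exact Pc|]].
      intros b [<-|Hb] Pb; [lra|specialize (Hmax b Hb Pb); lra].
    + exists m; split; [now right|split; [exact Pm|]].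
      intros b [<-|Hb] Pb; [|auto]. apply Rnot_lt_le; intros Hlt; apply Hc; split; [exact Pb|lra].
  - destruct Ha as [<-|Ha]; [|exfalso; apply Hnone; eauto].
    exists c; split; [now left|split; [exact Pa|]].
    intros b [<-|Hb] Pb; [lra|exfalso; apply Hnone; eauto].
Qed.

Lemma gap_from_point (l : list R) (a : R) :
  exists g, 0 < g /\ forall b, In b l -> a <> b -> g <= Rabs (a - b).
Proof.
  induction l as [|c l [g [Hg IH]]].
  - exists 1; split; [lra|intros b []].
  - destruct (Req_dec_T a c) as [<-|Hac].
    + exists g; split; [exact Hg|]; intros b [<-|Hb] Hne; [congruence|auto].
    + exists (Rmin g (Rabs (a - c))); split.
      * apply Rmin_glb_lt; [exact Hg|apply Rabs_pos_lt; lra].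
      * intros b [<-|Hb] Hne; [apply Rmin_r|eapply Rle_trans; [apply Rmin_l|auto]].
Qed.

Lemma min_gap (l : list R) :
  exists g, 0 < g /\ forall a b, In a l -> In b l -> a <> b -> g <= Rabs (a - b).
Proof.
  induction l as [|c l [g [Hg IH]]].
  - exists 1; split; [lra|intros a b []].
  - destruct (gap_from_point l c) as [g' [Hg' Hc]].
    exists (Rmin g g'); split; [now apply Rmin_glb_lt|].
    intros a b [<-|Ha] [<-|Hb] Hne.
    + congruence.
    + eapply Rle_trans; [apply Rmin_r|auto].
    + eapply Rle_trans; [apply Rmin_r|]; rewrite Rabs_minus_sym; auto.
    + eapply Rle_trans; [apply Rmin_l|auto].
Qed.

Lemma steep_functional_injective (K g B a1 b1 a2 b2 : R) :
  0 < K -> B < K * g -> (a1 <> a2 -> g <= Rabs (a1 - a2)) -> Rabs (b1 - b2) <= B ->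
  K * a1 + b1 = K * a2 + b2 -> (a1, b1) = (a2, b2).
Proof.
  intros HK HKg Hsep Hb Heq.
  destruct (Req_dec_T a1 a2) as [<-|Hne]; [f_equal; lra|exfalso].
  assert (Habs : K * Rabs (a1 - a2) = Rabs (b1 - b2)).
  { rewrite <- (Rabs_pos_eq K), <- Rabs_mult by lra.
    rewrite <- Rabs_Ropp; f_equal; lra. }
  assert (K * g <= K * Rabs (a1 - a2)) by (apply Rmult_le_compat_l; [lra|auto]).
  lra.
Qed.

Lemma weight_gt_3 (p q g M : R) : q < p -> 0 < g -> M * g = 4 * (p - q) + 3 * g -> 3 < M.
Proof. intros Hqp Hg HM; apply (Rmult_lt_reg_r g); [exact Hg|]; rewrite HM; lra. Qed.

Section Collision.

Variable Jset : R -> R -> Prop.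
Variables p q g M bmax bmin : R.
Hypothesis q_lt_p : q < p.
Hypothesis g_pos : 0 < g.
Hypothesis M_spec : M * g = 4 * (p - q) + 3 * g.
Hypothesis fst_gap : forall a1 b1 a2 b2, Jset a1 b1 -> Jset a2 b2 -> a1 <> a2 -> g <= Rabs (a1 - a2).
Hypothesis fst_le_q : forall a b, Jset a b -> a <> p -> a <= q.
Hypothesis snd_over_p : forall b, Jset p b -> M - 1 <= b <= M + 1.
Hypothesis snd_elsewhere : forall a b, Jset a b -> a <> p -> -1 <= b <= 1.
Hypothesis bmax_spec : Jset p bmax /\ forall b, Jset p b -> b <= bmax.
Hypothesis bmin_spec : Jset q bmin /\ forall b, Jset q b -> bmin <= b.

Let d := p - q.
Let h := bmax - bmin.

Lemma spread_large : M - 2 <= h.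
Proof.
  destruct bmax_spec as [Hmax _], bmin_spec as [Hmin _].
  pose proof (snd_over_p _ Hmax); pose proof (snd_elsewhere _ _ Hmin ltac:(lra)).
  unfold h; lra.
Qed.

Let M_gt_3 : 3 < M := weight_gt_3 p q g M q_lt_p g_pos M_spec.

(* A collision between a pair over p and a pair over a <> p is the extreme
   one: over a < q the slope h / d is too steep to be matched. *)
Lemma collision_with_p (a b1 b2 : R) :
  Jset p b1 -> Jset a b2 -> a <> p -> h * (p - a) = d * (b1 - b2) ->
  a = q /\ b1 = bmax /\ b2 = bmin.
Proof.
  intros H1 H2 Hap Heq.
  pose proof (snd_over_p _ H1); pose proof (snd_elsewhere _ _ H2 Hap).
  pose proof spread_large; pose proof M_gt_3.
  destruct (Req_dec_T a q) as [->|Haq].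
  - assert (Hh : h = b1 - b2) by (apply (Rmult_eq_reg_r d); unfold d in *; lra).
    pose proof (proj2 bmax_spec _ H1); pose proof (proj2 bmin_spec _ H2).
    unfold h in Hh; repeat split; lra.
  - exfalso.
    assert (Haq' : a <= q - g).
    { pose proof (fst_le_q _ _ H2 Hap) as Hle.
      pose proof (fst_gap _ _ _ _ H2 (proj1 bmin_spec) Haq) as Hgap.
      rewrite Rabs_minus_sym, Rabs_pos_eq in Hgap; lra. }
    assert ((M - 2) * (d + g) <= h * (p - a)) by (apply Rmult_le_compat; unfold d in *; lra).
    assert (d * (b1 - b2) <= d * (M + 2)) by (apply Rmult_le_compat_l; unfold d; lra).
    assert ((M - 2) * (d + g) = d * (M + 2) + g).
    { unfold d; nra. }
    lra.
Qed.

(* The only collision of h a - d b on Jset is between (p, bmax) and (q, bmin);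
   pairs away from p have second coordinates too close for the steep slope. *)
Lemma collision_pairs (a1 b1 a2 b2 : R) :
  Jset a1 b1 -> Jset a2 b2 -> h * a1 - d * b1 = h * a2 - d * b2 ->
  (a1, b1) = (a2, b2) \/
  ((a1, b1) = (p, bmax) /\ (a2, b2) = (q, bmin)) \/
  ((a1, b1) = (q, bmin) /\ (a2, b2) = (p, bmax)).
Proof.
  intros H1 H2 Heq.
  destruct (Req_dec_T a1 a2) as [<-|Ha12].
  { left; f_equal; apply (Rmult_eq_reg_l d); unfold d in *; lra. }
  destruct (Req_dec_T a1 p) as [->|Ha1p]; destruct (Req_dec_T a2 p) as [->|Ha2p].
  - contradiction.
  - destruct (collision_with_p a2 b1 b2 H1 H2 Ha2p ltac:(lra)) as [-> [-> ->]].
    right; left; auto.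
  - destruct (collision_with_p a1 b2 b1 H2 H1 Ha1p ltac:(lra)) as [-> [-> ->]].
    right; right; auto.
  - exfalso.
    pose proof (snd_elsewhere _ _ H1 Ha1p); pose proof (snd_elsewhere _ _ H2 Ha2p).
    pose proof (fst_gap _ _ _ _ H1 H2 Ha12); pose proof spread_large; pose proof M_gt_3.
    assert (Habs : h * Rabs (a1 - a2) = d * Rabs (b1 - b2)).
    { rewrite <- (Rabs_pos_eq h), <- (Rabs_pos_eq d), <- !Rabs_mult by (unfold d; lra).
      f_equal; lra. }
    assert (Rabs (b1 - b2) <= 2) by (apply Rabs_le; lra).
    assert ((M - 2) * g <= h * Rabs (a1 - a2)) by (apply Rmult_le_compat; lra).
    assert (d * Rabs (b1 - b2) <= d * 2) by (apply Rmult_le_compat_l; unfold d; lra).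
    assert ((M - 2) * g = 4 * d + g) by (unfold d; lra).
    unfold d in *; lra.
Qed.

End Collision.

Lemma joint_listing (x w : rseq) (lx lw : list R) :
  Defs.bounded w -> NoDup lx ->
  (forall a, In a lx <-> acc_point x a) -> (forall b, In b lw <-> acc_point w b) ->
  exists J, NoDup J /\ (forall a b, In (a, b) J <-> joint_acc x w a b) /\
    (length lx <= length J)%nat.
Proof.
  intros Bw NDx Ix Iw.
  assert (dec : forall u v : R * R, {u = v} + {u <> v}) by (decide equality; apply Req_dec_T).
  destruct (finite_listing dec (fun u => joint_acc x w (fst u) (snd u)) (list_prod lx lw))
    as [J [HJ IJ]].
  { intros [a b] Hab; apply in_prod; [apply Ix | apply Iw]; apply (joint_acc_proj _ _ _ _ Hab). }
  exists J; split; [exact HJ|split; [intros a b; exact (IJ (a, b))|]].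
  rewrite <- (length_map fst J); apply NoDup_incl_length; [exact NDx|].
  intros a Ha; destruct (joint_acc_fiber x w a Bw (proj1 (Ix a) Ha)) as [b Hb].
  apply in_map_iff; exists (a, b); split; [reflexivity|apply IJ, Hb].
Qed.

Section JointPairs.

Variables x w : rseq.
Variable J : list (R * R).
Variables p q g M : R.
Hypothesis x_bounded : Defs.bounded x.
Hypothesis w_bounded : Defs.bounded w.
Hypothesis J_nodup : NoDup J.
Hypothesis J_spec : forall a b, In (a, b) J <-> joint_acc x w a b.
Hypothesis q_lt_p : q < p.
Hypothesis g_pos : 0 < g.
Hypothesis M_spec : M * g = 4 * (p - q) + 3 * g.
Hypothesis acc_p : acc_point x p.
Hypothesis acc_q : acc_point x q.
Hypothesis acc_gap : forall a1 a2, acc_point x a1 -> acc_point x a2 -> a1 <> a2 -> g <= Rabs (a1 - a2).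
Hypothesis acc_le_q : forall a, acc_point x a -> a <> p -> a <= q.
Hypothesis snd_over_p : forall b, joint_acc x w p b -> M - 1 <= b <= M + 1.
Hypothesis snd_elsewhere : forall a b, joint_acc x w a b -> a <> p -> -1 <= b <= 1.

Lemma joint_snd_range (a b : R) : joint_acc x w a b -> -1 <= b <= M + 1.
Proof.
  intros Hab; destruct (Req_dec_T a p) as [->|Hap].
  - pose proof (snd_over_p _ Hab); pose proof (weight_gt_3 p q g M q_lt_p g_pos M_spec); lra.
  - pose proof (snd_elsewhere _ _ Hab Hap); pose proof (weight_gt_3 p q g M q_lt_p g_pos M_spec); lra.
Qed.

Lemma acc_comb_image (al be c : R) :
  acc_point (fun n => al * x n + be * w n) c <->
  exists u, In u J /\ c = al * fst u + be * snd u.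
Proof.
  rewrite acc_point_comb by assumption; split.
  - intros [a [b [Hab ->]]]; exists (a, b); split; [apply J_spec|]; auto.
  - intros [[a b] [Hab ->]]; exists a, b; split; [apply J_spec|]; auto.
Qed.

Let card_steep_comb :
  exists al be, has_card (acc_point (fun n => al * x n + be * w n)) (length J).
Proof.
  set (K := (M + 3) / g).
  assert (HKg : K * g = M + 3) by (unfold K; field; lra).
  assert (HK : 0 < K) by (unfold K; apply Rdiv_lt_0_compat; [pose proof (weight_gt_3 p q g M q_lt_p g_pos M_spec)|]; lra).
  exists K, 1; apply (has_card_image _ (fun u => K * fst u + 1 * snd u)); auto.
  - intros [a1 b1] [a2 b2] H1 H2 Heq; simpl in Heq.
    apply J_spec in H1, H2.
    apply (steep_functional_injective K g (M + 2)); [exact HK|lra| | |lra].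
    + intros Hne; apply acc_gap; [apply (joint_acc_proj _ _ _ _ H1)|apply (joint_acc_proj _ _ _ _ H2)|exact Hne].
    + pose proof (joint_snd_range _ _ H1); pose proof (joint_snd_range _ _ H2); apply Rabs_le; lra.
  - intros c; apply acc_comb_image.
Qed.

Let card_collapsing_comb :
  exists al be, has_card (acc_point (fun n => al * x n + be * w n)) (pred (length J)).
Proof.
  assert (In_snd : forall a b, joint_acc x w a b -> In b (map snd J)).
  { intros a b Hab; apply in_map_iff; exists (a, b); split; [reflexivity|apply J_spec, Hab]. }
  assert (Hfiber : forall a, acc_point x a -> exists b, In b (map snd J) /\ joint_acc x w a b).
  { intros a Ha; destruct (joint_acc_fiber x w a w_bounded Ha) as [b Hb]; eauto. }
  destruct (list_argmax (joint_acc x w p) (fun b => b) (map snd J) (Hfiber p acc_p))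
    as [bmax [_ [Hbmax Hbmax_max]]].
  destruct (list_argmax (joint_acc x w q) Ropp (map snd J) (Hfiber q acc_q))
    as [bmin [_ [Hbmin Hbmin_min]]].
  exists (bmax - bmin), (- (p - q)).
  apply (has_card_image_one_collision _ (fun u => (bmax - bmin) * fst u + (- (p - q)) * snd u)
           J (p, bmax) (q, bmin)); auto.
  - apply J_spec, Hbmax.
  - apply J_spec, Hbmin.
  - intros E; injection E; lra.
  - simpl; ring.
  - intros [a1 b1] [a2 b2] H1 H2 Heq; simpl in Heq; apply J_spec in H1, H2.
    apply (collision_pairs (joint_acc x w) p q g M bmax bmin); auto.
    + intros a1' b1' a2' b2' H1' H2'; apply acc_gap;
        [apply (joint_acc_proj _ _ _ _ H1')|apply (joint_acc_proj _ _ _ _ H2')].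
    + intros a b Hab; apply acc_le_q, (joint_acc_proj _ _ _ _ Hab).
    + split; [exact Hbmax|intros b Hb; apply Hbmax_max; eauto].
    + split; [exact Hbmin|intros b Hb; apply Ropp_le_cancel, Hbmin_min; eauto].
    + lra.
  - intros c; apply acc_comb_image.
Qed.

Lemma combinations_with_consecutive_cards :
  exists al be ga de,
    has_card (acc_point (fun n => al * x n + be * w n)) (length J) /\
    has_card (acc_point (fun n => ga * x n + de * w n)) (pred (length J)).
Proof.
  destruct card_steep_comb as [al [be Hsteep]].
  destruct card_collapsing_comb as [ga [de Hcollapse]].
  exists al, be, ga, de; split; assumption.
Qed.

End JointPairs.

Lemma acc_point_zero (c : R) : acc_point zero_seq c <-> c = 0.
Proof.
  assert (Hcv : Un_cv (fun _ => 0) 0).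
  { intros eps Heps; exists O; intros n _; unfold R_dist; rewrite Rminus_diag, Rabs_R0; lra. }
  split.
  - intros [phi [_ Hc]]; exact (UL_sequence _ _ _ Hc Hcv).
  - intros ->; exists (fun n => n); split; [intros n; lia|exact Hcv].
Qed.

Lemma card_zero_seq : has_card (acc_point zero_seq) 1.
Proof.
  exists (0 :: nil); split; [constructor; [intros []|constructor]|split; [reflexivity|]].
  intros a; rewrite acc_point_zero; simpl; split; [intros [<-|[]]|intros ->; left]; reflexivity.
Qed.

Section DenseSubspace.

Variable A : nat -> Prop.
Variable V : rseq -> Prop.
Hypothesis V_subspace : linear_subspace V.
Hypothesis V_dense : dense_in_linf V.
Hypothesis V_in_LA : forall x, V x -> in_LA A x \/ x = zero_seq.

Lemma V_bounded (x : rseq) : V x -> Defs.bounded x.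
Proof. apply V_subspace. Qed.

Lemma V_comb (x w : rseq) (al be : R) : V x -> V w -> V (fun n => al * x n + be * w n).
Proof.
  destruct V_subspace as [_ [_ [V_add V_scal]]]; intros Vx Vw.
  apply V_add; apply V_scal; assumption.
Qed.

Lemma V_acc_listing (x : rseq) :
  V x -> exists l, NoDup l /\ forall a, In a l <-> acc_point x a.
Proof.
  intros Vx; destruct (V_in_LA x Vx) as [[_ [k [_ [l [NDl [_ Il]]]]]]| ->].
  - exists l; auto.
  - destruct card_zero_seq as [l [NDl [_ Il]]]; exists l; auto.
Qed.

(* A cardinality different from 1 realised in V belongs to A, since only the
   zero vector escapes L(A) and |L_0| = 1. *)
Lemma V_card_in_A (x : rseq) (k : nat) :
  V x -> has_card (acc_point x) k -> k <> 1%nat -> A k.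
Proof.
  intros Vx Hk Hk1; destruct (V_in_LA x Vx) as [[_ [k' [Ak' Hk']]]| ->].
  - rewrite (has_card_unique _ _ _ Hk Hk'); exact Ak'.
  - exfalso; exact (Hk1 (has_card_unique _ _ _ Hk card_zero_seq)).
Qed.

(* V contains vectors with at least n accumulation points: approximate within 1
   the staircase 3 (k mod (n+1)), whose n+1 levels are 3 apart. *)
Lemma V_many_acc (n : nat) :
  exists x l, V x /\ NoDup l /\ (forall a, In a l <-> acc_point x a) /\ (n <= length l)%nat.
Proof.
  set (K := S n).
  set (z := fun k : nat => 3 * INR (k mod K)).
  assert (Bz : Defs.bounded z).
  { exists (3 * INR K); intros k; unfold z.
    rewrite Rabs_pos_eq by (pose proof (pos_INR (k mod K)); lra).
    apply Rmult_le_compat_l; [lra|]; apply le_INR.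
    pose proof (Nat.mod_upper_bound k K ltac:(unfold K; lia)); lia. }
  destruct (V_dense z Bz 1 ltac:(lra)) as [y [Vy Hy]].
  destruct (V_acc_listing y Vy) as [l [NDl Il]].
  exists y, l; split; [exact Vy|split; [exact NDl|split; [exact Il|]]].
  assert (Hband : forall j, exists c, (j < K)%nat ->
            acc_point y c /\ 3 * INR j - 1 <= c <= 3 * INR j + 1).
  { intros j; destruct (Nat.lt_ge_cases j K) as [Hj|Hj]; [|exists 0; intros; lia].
    destruct (acc_point_band y (fun i => j + i * K)%nat (3 * INR j - 1) (3 * INR j + 1))
      as [c Hc]; [exact (V_bounded y Vy)|intros i; simpl; lia| |exists c; auto].
    intros i; specialize (Hy (j + i * K)%nat); unfold z in Hy.
    rewrite Nat.Div0.mod_add, Nat.mod_small in Hy by exact Hj.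
    apply Rabs_le_bounds in Hy; lra. }
  destruct (choice _ Hband) as [cf Hcf].
  enough (HK : (K <= length l)%nat) by (unfold K in HK; lia).
  replace K with (length (map cf (seq 0 K))) at 1 by (rewrite length_map, length_seq; reflexivity).
  apply NoDup_incl_length.
  - apply NoDup_map_NoDup_ForallPairs; [|apply seq_NoDup].
    intros i j Hi Hj Heq; apply in_seq in Hi, Hj.
    destruct (Hcf i ltac:(lia)) as [_ Hci], (Hcf j ltac:(lia)) as [_ Hcj].
    destruct (Nat.lt_total i j) as [Hij|[Hij|Hij]]; [exfalso| exact Hij |exfalso];
      apply le_INR in Hij; rewrite S_INR in Hij; lra.
  - intros c Hc; apply in_map_iff in Hc; destruct Hc as [j [<- Hj]].
    apply in_seq in Hj; apply Il, Hcf; lia.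
Qed.

Lemma V_probe (x : rseq) (p q M : R) :
  q < p -> (forall a, acc_point x a -> a <> p -> a <= q) ->
  exists w, V w /\ (forall b, joint_acc x w p b -> M - 1 <= b <= M + 1) /\
    (forall a b, joint_acc x w a b -> a <> p -> -1 <= b <= 1).
Proof.
  intros Hqp Hle.
  set (r := (p - q) / 2).
  set (t := fun k => if Rlt_dec (Rabs (x k - p)) r then M else 0).
  assert (Bt : Defs.bounded t).
  { exists (Rabs M); intros k; unfold t; destruct Rlt_dec; [lra|rewrite Rabs_R0; apply Rabs_pos]. }
  destruct (V_dense t Bt 1 ltac:(lra)) as [w [Vw Hw]].
  exists w; split; [exact Vw|split].
  - intros b Hb; apply (joint_acc_snd_bounds x w p b r); [exact Hb|unfold r; lra|].
    intros k Hk; specialize (Hw k); unfold t in Hw; destruct Rlt_dec; [|contradiction].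
    apply Rabs_le_bounds in Hw; lra.
  - intros a b Hab Hap.
    pose proof (Hle a (proj1 (joint_acc_proj _ _ _ _ Hab)) Hap).
    apply (joint_acc_snd_bounds x w a b r); [exact Hab|unfold r; lra|].
    intros k Hk; specialize (Hw k); unfold t in Hw; destruct Rlt_dec as [Hkp|_].
    + apply Rabs_def2 in Hk, Hkp; unfold r in *; lra.
    + rewrite Rminus_0_l, Rabs_Ropp in Hw; apply Rabs_le_bounds in Hw; lra.
Qed.

Lemma V_consecutive (x : rseq) (lx : list R) :
  V x -> NoDup lx -> (forall a, In a lx <-> acc_point x a) -> (3 <= length lx)%nat ->
  exists k, (length lx <= S k)%nat /\ A k /\ A (S k).
Proof.
  intros Vx NDx Ix Hlen.
  destruct (list_argmax (fun _ => True) (fun a => a) lx) as [p [Hp [_ Hp_max]]].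
  { destruct lx as [|a l]; [simpl in Hlen; lia|exists a; split; [left|]; auto]. }
  destruct (list_argmax (fun a => a <> p) (fun a => a) lx) as [q [Hq [Hqp Hq_max]]].
  { destruct lx as [|a0 [|a1 l]]; simpl in Hlen; try lia.
    destruct (Req_dec_T a0 p) as [->|H0]; [|exists a0; split; [left|]; auto].
    exists a1; split; [right; left; reflexivity|intros ->].
    inversion NDx as [|? ? Hnotin]; apply Hnotin; left; reflexivity. }
  destruct (min_gap lx) as [g [Hg Hgap]].
  assert (Hq_lt_p : q < p) by (pose proof (Hp_max q Hq I); lra).
  set (M := (4 * (p - q) + 3 * g) / g).
  assert (HM : M * g = 4 * (p - q) + 3 * g) by (unfold M; field; lra).
  assert (Hle_q : forall a, acc_point x a -> a <> p -> a <= q)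
    by (intros a Ha Hap; apply Hq_max; [apply Ix|]; assumption).
  destruct (V_probe x p q M Hq_lt_p Hle_q) as [w [Vw [Hover Helse]]].
  destruct (V_acc_listing w Vw) as [lw [_ Iw]].
  destruct (joint_listing x w lx lw (V_bounded w Vw) NDx Ix Iw) as [J [NDJ [IJ HJ]]].
  destruct (combinations_with_consecutive_cards x w J p q g M (V_bounded x Vx) (V_bounded w Vw)
              NDJ IJ Hq_lt_p Hg HM (proj1 (Ix p) Hp) (proj1 (Ix q) Hq)
              (fun a1 a2 H1 H2 => Hgap a1 a2 (proj2 (Ix a1) H1) (proj2 (Ix a2) H2))
              Hle_q Hover Helse) as [al [be [ga [de [Hcard Hcard']]]]].
  exists (pred (length J)); split; [lia|split].
  - apply (V_card_in_A _ _ (V_comb x w ga de Vx Vw) Hcard'); lia.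
  - replace (S (pred (length J))) with (length J) by lia.
    apply (V_card_in_A _ _ (V_comb x w al be Vx Vw) Hcard); lia.
Qed.

End DenseSubspace.

Theorem theorem2p7 :
  (forall A : nat -> Prop, ~ A 1%nat ->
     densely_lineable (in_LA A) ->
     infinite_nat (fun n => A n /\ A (S n)))
  /\ ~ densely_lineable (in_LA odd_set)
  /\ ~ densely_lineable (in_LA even_set).
Proof.
  assert (consecutive : forall A, densely_lineable (in_LA A) ->
            infinite_nat (fun n => A n /\ A (S n))).
  { intros A [V [HV [_ [Vd VA]]]] N.
    destruct (V_many_acc A V HV Vd VA (N + 3)) as [x [lx [Vx [NDx [Ix Hlen]]]]].
    destruct (V_consecutive A V HV Vd VA x lx Vx NDx Ix ltac:(lia)) as [k [Hk [Ak ASk]]].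
    exists k; split; [lia|split; assumption]. }
  split; [intros A _; apply consecutive|split; intros Hlin].
  - destruct (consecutive _ Hlin O) as [n [_ [[m1 [_ E1]] [m2 [_ E2]]]]]; lia.
  - destruct (consecutive _ Hlin O) as [n [_ [[m1 [_ E1]] [m2 [_ E2]]]]]; lia.
Qed.
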